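(* Let $R$ be a unital amenable affine algebra over a field $K$, with a fixed Følner exhaustion $\{W_n\}$ and ultralimit $\lim_\omega$, and let $\mathrm{rank}$ be the associated rank function on finitely generated left $R$-modules. Then: (1) $\mathrm{rank}(R^n)=n$ for every $n\ge1$ (in particular $R$ has the unique rank property); (2) if $M,N$ are finitely generated $R$-modules and $M$ is either a submodule or a homomorphic image of $N$, then $\mathrm{rank}(M)\le\mathrm{rank}(N)$; (3) if $M,N$ are finitely generated $R$-modules, then $\mathrm{rank}(M\oplus N)=\mathrm{rank}(M)+\mathrm{rank}(N)$.
   Context: An affine algebra is a finitely generated associative algebra over $K$. A Følner exhaustion is a sequence of finite-dimensional $K$-subspaces $W_1\subseteq W_2\subseteq\cdots$ with $\bigcup_nW_n=R$ such that for every $r\in R$, $\lim_{n\to\infty}\dim_K(W_nr+W_n)/\dim_K(W_n)=1$; $R$ is amenable if one exists. $\omega$ is an ultrafilter on $\mathbb N$ and $\lim_\omega$ the associated linear functional on bounded real sequences with $\liminf\le\lim_\omega\le\limsup$, agreeing with the limit on convergent sequences. For a finitely generated module $M=\sum_{i=1}^rRx_i$, $\mathrm{rank}(M)=\lim_\omega\dim_K(W_nx_1+\cdots+W_nx_r)/\dim_K(W_n)$, which is independent of the generators chosen. *)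

From HB Require Import structures.
From mathcomp Require Import all_boot all_order all_algebra.
From mathcomp Require Import all_classical all_reals all_analysis.
Set Implicit Arguments. Unset Strict Implicit. Unset Printing Implicit Defensive.
Import Order.TTheory GRing.Theory Num.Theory.
Import numFieldNormedType.Exports.
Local Open Scope ring_scope.
Local Open Scope classical_set_scope.

Inductive in_subalg (K : fieldType) (R : algType K) (gens : seq R) : R -> Prop :=
  | subalg_gen x : x \in gens -> in_subalg gens x
  | subalg_one : in_subalg gens 1
  | subalg_add x y : in_subalg gens x -> in_subalg gens y -> in_subalg gens (x + y)
  | subalg_mul x y : in_subalg gens x -> in_subalg gens y -> in_subalg gens (x * y)
  | subalg_scale (k : K) x : in_subalg gens x -> in_subalg gens (k *: x).

Definition affine_algebra (K : fieldType) (R : algType K) : Prop :=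
  exists gens : seq R, forall r : R, in_subalg gens r.

(* A left R-module V is a K-vector space via  k . v := (k%:A) *: v. *)

Definition spanK (K : fieldType) (R : algType K) (V : lmodType R) (s : seq V) : set V :=
  [set v | exists c : 'I_(size s) -> K, v = \sum_(i < size s) ((c i)%:A : R) *: s`_i].

Definition fd_subspace (K : fieldType) (R : algType K) (V : lmodType R) (A : set V) : Prop :=
  exists s : seq V, A = spanK s.

(* dim_K A := the least size of a finite family spanning A (= dimension of A
   when A is a finite-dimensional subspace; 0 by convention otherwise). *)
Definition dimK (K : fieldType) (R : algType K) (V : lmodType R) (A : set V) : nat :=
  let P : pred nat := fun n => `[< exists s : seq V, size s = n /\ A = spanK s >] in
  match pselect (exists n, P n) with
  | left h => ex_minn h
  | right _ => 0%N
  end.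

Definition setadd (V : zmodType) (A B : set V) : set V :=
  [set v | exists a b, A a /\ B b /\ v = a + b].

Definition setscale (K : fieldType) (R : algType K) (V : lmodType R) (W : set R) (x : V) : set V :=
  [set w *: x | w in W].

Definition sum_orbits (K : fieldType) (R : algType K) (V : lmodType R) (W : set R) (xs : seq V)
  : set V := foldr (fun x S => setadd (setscale W x) S) [set 0] xs.

Definition setmulr (K : fieldType) (R : algType K) (W : set R) (r : R) : set R :=
  [set w * r | w in W].

Definition folner_exhaustion (RR : realType) (K : fieldType) (R : algType K)
  (W : nat -> set R) : Prop :=
  [/\ (forall n, @fd_subspace K R R^o (W n)),
      (forall n, W n `<=` W n.+1),
      (\bigcup_n W n = [set: R]) &
      (forall r : R,
         (fun n => (dimK (V := R^o) (setadd (setmulr (W n) r) (W n)))%:R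
                   / (dimK (V := R^o) (W n))%:R : RR) @ \oo --> (1 : RR))].

Definition nonprincipal_ultrafilter (omega : set_system nat) : Prop :=
  UltraFilter omega /\ (forall A : set nat, finite_set A -> omega (~` A)).

Definition ulim (RR : realType) (omega : set_system nat) (a : nat -> RR) : RR :=
  lim (a @ omega).

Definition generates (K : fieldType) (R : algType K) (M : lmodType R) (xs : seq M) : Prop :=
  forall m : M, exists c : 'I_(size xs) -> R, m = \sum_(i < size xs) c i *: xs`_i.

Definition fin_gen (K : fieldType) (R : algType K) (M : lmodType R) : Prop :=
  exists xs : seq M, generates xs.

Definition rank_gens (RR : realType) (K : fieldType) (R : algType K)
  (W : nat -> set R) (omega : set_system nat) (M : lmodType R) (xs : seq M) : RR :=
  ulim omega (fun n => (dimK (sum_orbits (W n) xs))%:R / (dimK (V := R^o) (W n))%:R).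

(* rank(M), computed from some (chosen) finite generating family of M;
   the paper shows it is independent of this choice. *)
Definition rank (RR : realType) (K : fieldType) (R : algType K)
  (W : nat -> set R) (omega : set_system nat) (M : lmodType R) : RR :=
  match pselect (exists xs : seq M, generates xs) with
  | left h => rank_gens RR W omega (proj1_sig (cid h))
  | right _ => 0
  end.

(* For a finite-dimensional subspace W of R and a family ys of elements of a
   module, write W.ys := W y_1 + ... + W y_r.  If z = \sum_i c_i y_i, then
   (W c_i) y_i lies in W y_i + T_i y_i, where T_i complements W in W c_i + W, so
   dim W.zs <= dim W.ys + \sum_{z,i} (dim (W c_i + W) - dim W).  Along a Folner
   exhaustion the error terms are o(dim W_n); taking the omega-limit of
   dim (W_n.zs) / dim W_n shows that the rank does not depend on the generators.
   Injective linear maps preserve dim W.xs and surjective ones do not increase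
   it, which gives (2); W.(xs, ys) in M * N is the direct sum of W.xs and W.ys,
   which gives (3); and W e_1 + ... + W e_n in R^n is direct of dimension
   n dim W, which gives (1).  The algebra need not be affine, and the exhaustion
   is only used through its Folner condition. *)

From Pilot Require Import Defs.
From HB Require Import structures.
From mathcomp Require Import all_boot all_order all_algebra.
From mathcomp Require Import all_classical all_reals all_analysis.
Set Implicit Arguments. Unset Strict Implicit. Unset Printing Implicit Defensive.
Import Order.TTheory GRing.Theory Num.Theory.
Import numFieldNormedType.Exports.
Local Open Scope ring_scope.
Local Open Scope classical_set_scope.

(** * Linear algebra over K inside an R-module *)

Section KSpan.
Variables (K : fieldType) (R : algType K) (V : lmodType R).

Lemma scaleKA (a b : K) (v : V) :
  (a%:A : R) *: ((b%:A : R) *: v) = ((a * b)%:A : R) *: v.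
Proof. by rewrite scalerA mulr_algl scalerA. Qed.

Lemma scaleK1 (v : V) : ((1 : K)%:A : R) *: v = v.
Proof. by rewrite !scale1r. Qed.

Lemma scaleK0 (v : V) : ((0 : K)%:A : R) *: v = 0.
Proof. by rewrite !scale0r. Qed.

Lemma scaleKDl (a b : K) (v : V) :
  ((a + b)%:A : R) *: v = (a%:A : R) *: v + (b%:A : R) *: v.
Proof. by rewrite !scalerDl. Qed.

Lemma spanK_nil : spanK ([::] : seq V) = [set 0].
Proof.
rewrite predeqE => v; split; first by move=> [c ->]; rewrite big_ord0.
by move=> ->; exists (fun=> 0); rewrite big_ord0.
Qed.

Lemma spanK_cons (x : V) s : spanK (x :: s) =
  [set v | exists k w, spanK s w /\ v = (k%:A : R) *: x + w].
Proof.
rewrite predeqE => v; split.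
  move=> [c ->]; rewrite big_ord_recl.
  exists (c ord0), (\sum_(i < size s) ((c (lift ord0 i))%:A : R) *: s`_i).
  by split=> //; exists (c \o lift ord0).
move=> [k [w [[c ->] ->]]].
exists (fun i : 'I_(size s).+1 => oapp c k (unlift ord0 i)).
rewrite big_ord_recl /= unlift_none; congr (_ + _).
by apply: eq_bigr => i _; rewrite liftK.
Qed.

Lemma spanK0 (s : seq V) : spanK s 0.
Proof. by exists (fun=> 0); rewrite big1 // => i _; rewrite scaleK0. Qed.

Lemma spanKD (s : seq V) u v : spanK s u -> spanK s v -> spanK s (u + v).
Proof.
move=> [c ->] [d ->]; exists (fun i => c i + d i).
by rewrite -big_split; apply: eq_bigr => i _; rewrite scaleKDl.
Qed.

Lemma spanKZ (s : seq V) (k : K) v : spanK s v -> spanK s ((k%:A : R) *: v).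
Proof.
move=> [c ->]; exists (fun i => k * c i).
by rewrite scaler_sumr; apply: eq_bigr => i _; rewrite scaleKA.
Qed.

Lemma spanKN (s : seq V) v : spanK s v -> spanK s (- v).
Proof. by move=> /(spanKZ (-1)); rewrite scaleN1r scaleN1r. Qed.

Lemma spanK_ind (P : set V) (s : seq V) :
  P 0 -> (forall u v, P u -> P v -> P (u + v)) ->
  (forall (k : K) v, P v -> P ((k%:A : R) *: v)) -> (forall x, x \in s -> P x) ->
  spanK s `<=` P.
Proof.
move=> P0 PD PZ Ps v [c ->]; apply: (big_ind P) => // i _.
by apply: PZ; apply: Ps; apply: mem_nth.
Qed.

Lemma spanK_sum (s : seq V) (I : Type) (r : seq I) (F : I -> V) :
  (forall i, spanK s (F i)) -> spanK s (\sum_(i <- r) F i).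
Proof. by move=> sF; apply: big_ind => //; [apply: spanK0 | apply: spanKD]. Qed.

Lemma mem_spanK (s : seq V) x : x \in s -> spanK s x.
Proof.
elim: s => // y s IH; rewrite in_cons spanK_cons => /orP[/eqP ->|/IH sx].
  by exists 1, 0; rewrite scaleK1 addr0; split; first apply: spanK0.
by exists 0, x; rewrite scaleK0 add0r.
Qed.

Lemma spanK_subset (s t : seq V) :
  (forall x, x \in s -> spanK t x) -> spanK s `<=` spanK t.
Proof.
move=> st; apply: spanK_ind st; [exact: spanK0 | exact: spanKD | exact: spanKZ].
Qed.

Lemma spanKS (s t : seq V) : {subset s <= t} -> spanK s `<=` spanK t.
Proof. by move=> st; apply: spanK_subset => x /st; apply: mem_spanK. Qed.

Lemma eq_spanK (s t : seq V) : s =i t -> spanK s = spanK t.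
Proof.
by move=> st; rewrite eqEsubset; split; apply: spanKS => x; rewrite st.
Qed.

Lemma spanK_cat (s t : seq V) : spanK (s ++ t) = setadd (spanK s) (spanK t).
Proof.
rewrite predeqE => v; split; last first.
  move=> [a [b [sa [tb ->]]]]; apply: spanKD.
    by apply: spanKS sa => x xs; rewrite mem_cat xs.
  by apply: spanKS tb => x xt; rewrite mem_cat xt orbT.
elim: s v => [|x s IH] v /=.
  by move=> tv; exists 0, v; rewrite add0r; split => //; apply: spanK0.
rewrite spanK_cons => -[k [_ [/IH [a [b [sa [tb ->]]]] ->]]].
by exists ((k%:A : R) *: x + a), b; rewrite addrA spanK_cons; split => //; exists k, a.
Qed.

Lemma setadd0 (A : set V) : setadd A [set 0] = A.
Proof.
rewrite predeqE => v; split; first by move=> [a [_ [Aa [-> ->]]]]; rewrite addr0.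
by move=> Av; exists v, 0; rewrite addr0.
Qed.

Lemma setaddC (A B : set V) : setadd A B = setadd B A.
Proof.
by rewrite predeqE => v; split=> -[a [b [Aa [Bb ->]]]]; exists b, a; rewrite addrC.
Qed.

Fixpoint freeK (s : seq V) : Prop :=
  if s is x :: s' then ~ spanK s' x /\ freeK s' else True.

Lemma freeK_coef0 (s : seq V) (c : 'I_(size s) -> K) : freeK s ->
  \sum_(i < size s) ((c i)%:A : R) *: s`_i = 0 -> forall i, c i = 0.
Proof.
elim: s c => [c _ _ [] //|x s IH c [nx fs]].
rewrite big_ord_recl /=; set w := \sum_(i < _) _ => cx0.
have sw : spanK s w by exists (c \o lift ord0).
have c0 : c ord0 = 0.
  have [//|nz0] := eqVneq (c ord0) 0; case: nx.
  have -> : x = (((c ord0)^-1)%:A : R) *: - w.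
    have -> : - w = ((c ord0)%:A : R) *: x by apply/esym/eqP; rewrite -addr_eq0 cx0.
    by rewrite scaleKA mulVf ?scaleK1.
  exact/spanKZ/spanKN.
move: cx0; rewrite c0 scaleK0 add0r => /(IH _ fs) cs0 i.
by case: (unliftP ord0 i) => [j ->|->].
Qed.

Lemma steinitz (s t : seq V) : freeK t -> (forall x, x \in t -> spanK s x) ->
  (size t <= size s)%N.
Proof.
move=> ft ts.
have /all_sig[C tC] : forall j : 'I_(size t), {c : 'I_(size s) -> K |
    t`_j = \sum_(i < size s) ((c i)%:A : R) *: s`_i}.
  by move=> j; apply/cid/ts/mem_nth.
pose M := \matrix_(j < size t, i < size s) C j i.
suff /eqP <- : row_free M by apply: rank_leq_col.
apply: inj_row_free => u uM0; apply/rowP => j; rewrite mxE.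
apply: (freeK_coef0 (c := u 0) ft) j.
have -> : \sum_(j < size t) ((u 0 j)%:A : R) *: t`_j =
    \sum_(i < size s) (((u *m M) 0 i)%:A : R) *: s`_i.
  under eq_bigr => j _ do rewrite tC scaler_sumr.
  rewrite exchange_big; apply: eq_bigr => i _.
  by rewrite !mxE scaler_suml scaler_suml; apply: eq_bigr => j _; rewrite scaleKA mxE.
by rewrite uM0; apply: big1 => i _; rewrite mxE scaleK0.
Qed.

Lemma dimK_leq_size (A : set V) (s : seq V) : A = spanK s -> (dimK A <= size s)%N.
Proof.
move=> As; rewrite /dimK; case: pselect => [ex|[]]; last first.
  by exists (size s); apply/asboolP; exists s.
by case: ex_minnP => m _; apply; apply/asboolP; exists s.
Qed.

Lemma dimKP (A : set V) : fd_subspace A ->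
  exists s : seq V, size s = dimK A /\ A = spanK s.
Proof.
move=> [s0 As0]; rewrite /dimK; case: pselect => [ex|[]]; last first.
  by exists (size s0); apply/asboolP; exists s0.
by case: ex_minnP => m /asboolP.
Qed.

Lemma fd_spanK (s : seq V) : fd_subspace (spanK s).
Proof. by exists s. Qed.

Lemma freeK_extend (b s : seq V) : freeK b ->
  exists t, freeK (t ++ b) /\ spanK (t ++ b) = setadd (spanK b) (spanK s).
Proof.
elim: s b => [|x s IH] b fb; first by exists [::]; rewrite spanK_nil setadd0.
case: (pselect (spanK b x)) => bx.
  have [t [ftb tbE]] := IH b fb; exists t; rewrite tbE; split => //.
  rewrite -!spanK_cat eqEsubset; split.
    by apply: spanKS => y; rewrite !(mem_cat, in_cons) => /orP[->|->]; rewrite ?orbT.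
  apply: spanK_subset => y; rewrite mem_cat in_cons => /or3P[yb|/eqP ->|ys].
  - by apply: mem_spanK; rewrite mem_cat yb.
  - by apply: spanKS bx => z zb; rewrite mem_cat zb.
  - by apply: mem_spanK; rewrite mem_cat ys orbT.
have [t [ftxb txbE]] := IH (x :: b) (conj bx fb).
exists (rcons t x); rewrite cat_rcons txbE -!spanK_cat; split => //.
by apply: eq_spanK => y; rewrite !(mem_cat, in_cons) (orbC (y == x)) -orbA.
Qed.

Lemma dimK_freeK (b : seq V) : freeK b -> dimK (spanK b) = size b.
Proof.
move=> fb; apply/eqP; rewrite eqn_leq dimK_leq_size //=.
have [s [<- bs]] := dimKP (fd_spanK b).
by apply: steinitz => // x xb; rewrite -bs; apply: mem_spanK.
Qed.

Lemma basisK (A : set V) : fd_subspace A -> exists2 b, freeK b & A = spanK b.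
Proof.
move=> [s ->]; have [t] := freeK_extend s (b := [::]) I.
by rewrite cats0 spanK_nil setaddC setadd0 => -[ft <-]; exists t.
Qed.

Lemma dimKS (A B : set V) : fd_subspace A -> fd_subspace B -> A `<=` B ->
  (dimK A <= dimK B)%N.
Proof.
move=> /basisK[b fb ->] /dimKP[s [<- ->]] bs; rewrite dimK_freeK //.
by apply: steinitz => // x xb; apply/bs/mem_spanK.
Qed.

Lemma dimK_setadd_leq (A : set V) (t : seq V) : fd_subspace A ->
  (dimK (setadd A (spanK t)) <= dimK A + size t)%N.
Proof.
by move=> /dimKP[s [<- ->]]; rewrite -size_cat; apply: dimK_leq_size; rewrite spanK_cat.
Qed.

Lemma dimK_complement (A B : set V) : fd_subspace A -> fd_subspace B -> A `<=` B ->
  exists t : seq V, B `<=` setadd A (spanK t) /\ (dimK A + size t <= dimK B)%N.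
Proof.
move=> /basisK[b fb ->] [s ->] bs.
have [t [ftb tbE]] := freeK_extend s fb.
have {}tbE : spanK (t ++ b) = spanK s.
  rewrite tbE -spanK_cat eqEsubset; split.
      by apply: spanK_subset => x; rewrite mem_cat => /orP[/mem_spanK/bs|/mem_spanK].
  by apply: spanKS => x xs; rewrite mem_cat xs orbT.
exists t; rewrite -tbE dimK_freeK // dimK_freeK // size_cat addnC; split => //.
by rewrite spanK_cat setaddC.
Qed.

Lemma freeK_cat (s t : seq V) : freeK s -> freeK t ->
  (forall v, spanK s v -> spanK t v -> v = 0) -> freeK (s ++ t).
Proof.
elim: s => [//|x s IH] /= [nx fs] ft st0; split; last first.
  apply: IH => // v sv tv; apply: st0 => //; rewrite spanK_cons.
  by exists 0, v; rewrite scaleK0 add0r.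
rewrite spanK_cat => -[a [b [sa [tb xE]]]]; apply: nx.
suff b0 : b = 0 by rewrite xE b0 addr0.
apply: st0 => //; rewrite spanK_cons; exists 1, (- a); split; first exact: spanKN.
by rewrite scaleK1 xE addrC addKr.
Qed.

Lemma dimK_cat_disjoint (s t : seq V) : (forall v, spanK s v -> spanK t v -> v = 0) ->
  dimK (spanK (s ++ t)) = (dimK (spanK s) + dimK (spanK t))%N.
Proof.
move=> st0; have [b fb sE] := basisK (fd_spanK s).
have [c fc tE] := basisK (fd_spanK t).
have -> : spanK (s ++ t) = spanK (b ++ c) by rewrite !spanK_cat sE tE.
rewrite sE tE !dimK_freeK ?size_cat //.
by apply: freeK_cat => // v; rewrite -sE -tE; apply: st0.
Qed.

End KSpan.

Section KLinearMaps.
Variables (K : fieldType) (R : algType K) (V V' : lmodType R).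

Definition klinear (f : V -> V') :=
  forall k : K, {morph f : u v / (k%:A : R) *: u + v}.

Lemma linear_klinear (f : V -> V') : linear f -> klinear f.
Proof. by move=> fL k; apply: fL. Qed.

Variable f : V -> V'.
Hypothesis fL : klinear f.

Lemma klinear0 : f 0 = 0.
Proof. by apply: (addrI (f 0)); rewrite addr0 -{1}(scaleK1 (f 0)) -fL scaleK1 addr0. Qed.

Lemma spanK_map (s : seq V) : spanK (map f s) = f @` spanK s.
Proof.
elim: s => [|x s IH]; first by rewrite !spanK_nil image_set1 klinear0.
rewrite /= !spanK_cons predeqE => v; split.
  move=> [k [w [+ ->]]]; rewrite IH => -[u su <-].
  by exists ((k%:A : R) *: x + u); [exists k, u | rewrite fL].
move=> [_ [k [u [su ->]]] <-]; exists k, (f u); rewrite fL; split=> //.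
by rewrite IH; exists u.
Qed.

Lemma dimK_image_leq (A : set V) : fd_subspace A -> (dimK (f @` A) <= dimK A)%N.
Proof.
move=> /dimKP[s [<- ->]]; rewrite -(size_map f) -spanK_map.
exact: dimK_leq_size.
Qed.

Lemma spanK_kernel (s : seq V) v : (forall x, x \in s -> f x = 0) ->
  spanK s v -> f v = 0.
Proof.
move=> sf0 sv; have : spanK (map f s) (f v) by rewrite spanK_map; exists v.
suff /[apply] : spanK (map f s) `<=` spanK [::] by rewrite spanK_nil.
by apply: spanK_subset => _ /mapP[x xs ->]; rewrite sf0 //; apply: spanK0.
Qed.

Hypothesis f_inj : injective f.

Lemma freeK_map (s : seq V) : freeK s -> freeK (map f s).
Proof.
elim: s => // x s IH /= [nx fs]; split; last exact: IH.
by rewrite spanK_map => -[u su /f_inj ux]; apply: nx; rewrite -ux.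
Qed.

Lemma dimK_image_inj (A : set V) : fd_subspace A -> dimK (f @` A) = dimK A.
Proof.
by move=> /basisK[b fb ->]; rewrite -spanK_map !dimK_freeK ?size_map //; apply: freeK_map.
Qed.

End KLinearMaps.

(** * The subspaces W x_1 + ... + W x_r *)

Section Orbits.
Variables (K : fieldType) (R : algType K) (N : lmodType R).

Definition orbits_seq (w : seq R) (xs : seq N) : seq N :=
  flatten [seq [seq a *: x | a <- w] | x <- xs].

Lemma linear_scalel (x : N) : linear (fun a : R^o => a *: x).
Proof. by move=> r a b; rewrite scalerDl scalerA. Qed.

Lemma linear_mulr (r : R) : linear (fun a : R^o => (a * r : R^o)).
Proof. by move=> c a b; rewrite mulrDl -mulrA. Qed.

Lemma setscale_spanK (w : seq R) (x : N) :
  setscale (spanK (V := R^o) w) x = spanK [seq a *: x | a <- w].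
Proof. by rewrite (spanK_map (linear_klinear (linear_scalel x))). Qed.

Lemma setmulr_spanK (w : seq R) (r : R) :
  setmulr (spanK (V := R^o) w) r = spanK (V := R^o) [seq a * r | a <- w].
Proof. by rewrite (spanK_map (linear_klinear (linear_mulr r))). Qed.

Lemma sum_orbits_spanK (w : seq R) (xs : seq N) :
  sum_orbits (spanK (V := R^o) w) xs = spanK (orbits_seq w xs).
Proof. by elim: xs => [|x xs IH] /=; rewrite ?spanK_nil // IH setscale_spanK -spanK_cat. Qed.

Lemma size_orbits_seq (w : seq R) (xs : seq N) :
  size (orbits_seq w xs) = (size w * size xs)%N.
Proof. by elim: xs => [|x xs IH] /=; rewrite ?muln0 // size_cat size_map IH mulnS. Qed.

Lemma orbits_seq_cat (w : seq R) (s t : seq N) :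
  orbits_seq w (s ++ t) = orbits_seq w s ++ orbits_seq w t.
Proof. by rewrite /orbits_seq map_cat flatten_cat. Qed.

Lemma mem_orbits_seq (w : seq R) (xs : seq N) a x :
  a \in w -> x \in xs -> a *: x \in orbits_seq w xs.
Proof. by move=> aw xxs; apply/flatten_mapP; exists x => //; apply: map_f. Qed.

Lemma dimK_sum_orbits_leq (W : set R) (xs : seq N) : fd_subspace (V := R^o) W ->
  (dimK (sum_orbits W xs) <= dimK (V := R^o) W * size xs)%N.
Proof.
move=> /dimKP[w [<- ->]]; rewrite -size_orbits_seq.
by apply: dimK_leq_size; rewrite sum_orbits_spanK.
Qed.

Lemma fd_sum_orbits (W : set R) (xs : seq N) :
  fd_subspace (V := R^o) W -> fd_subspace (sum_orbits W xs).
Proof. by move=> [w ->]; rewrite sum_orbits_spanK; apply: fd_spanK. Qed.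

Definition excess (W : set R) (r : R) : nat :=
  (dimK (V := R^o) (setadd (setmulr W r) W) - dimK (V := R^o) W)%N.

Lemma spanK_cat_flatten (I : eqType) (r : seq I) (A : seq N) (T : I -> seq N) i :
  i \in r -> spanK (A ++ T i) `<=` spanK (A ++ flatten (map T r)).
Proof.
move=> ir; apply: spanKS => x; rewrite !mem_cat => /orP[->//|xT].
by apply/orP; right; apply/flatten_mapP; exists i.
Qed.

Lemma size_flatten_map (I : Type) (r : seq I) (T : I -> seq N) :
  size (flatten (map T r)) = (\sum_(i <- r) size (T i))%N.
Proof. by rewrite size_flatten sumnE /shape -map_comp big_map. Qed.

(* W c + W = W + span t with size t <= excess W c, hence (W c) y lies in
   W y + t y. *)
Lemma orbit_excess (w : seq R) (ys : seq N) y (c : R) : y \in ys ->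
  exists T : seq N, (size T <= excess (spanK (V := R^o) w) c)%N /\
  forall a, a \in w -> spanK (orbits_seq w ys ++ T) ((a * c) *: y).
Proof.
move=> yys; rewrite /excess; set A := setadd _ _.
have fdA : fd_subspace (V := R^o) A.
  by exists ([seq a * c | a <- w] ++ w); rewrite spanK_cat /A setmulr_spanK.
have wA : spanK (V := R^o) w `<=` A.
  move=> u wu; exists 0, u; rewrite add0r; split=> //.
  by exists 0; rewrite ?mul0r //; apply: spanK0.
have [t [At ht]] := dimK_complement (fd_spanK (V := R^o) w) fdA wA.
exists [seq a *: y | a <- t]; split.
  by rewrite size_map leq_subRL // (leq_trans (leq_addr _ _) ht).
move=> a aw; have /At[u [v [wu [tv ->]]]] : A (a * c).
  exists (a * c), 0; rewrite addr0; split; first by exists a => //; apply: mem_spanK.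
  by split=> //; apply: spanK0.
rewrite (scalerDl y u v : (u + v : R) *: y = _) spanK_cat.
exists (u *: y), (v *: y); split; last by split=> //; rewrite -setscale_spanK; exists v.
have : spanK [seq a *: y | a <- w] (u *: y) by rewrite -setscale_spanK; exists u.
by apply: spanKS => _ /mapP[b bw ->]; apply: mem_orbits_seq.
Qed.

Lemma combination_excess (w : seq R) (ys : seq N) (c : 'I_(size ys) -> R) :
  exists T : seq N, (size T <= \sum_(i < size ys) excess (spanK (V := R^o) w) (c i))%N /\
  forall a, a \in w -> spanK (orbits_seq w ys ++ T) (a *: \sum_(i < size ys) c i *: ys`_i).
Proof.
have [T /all_and2[sizeT wT]] :=
  choice (fun i => orbit_excess w (c i) (mem_nth 0 (ltn_ord i))).
exists (flatten (map T (index_enum 'I_(size ys)))); split.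
  by rewrite size_flatten_map; apply: leq_sum => i _.
move=> a aw; rewrite scaler_sumr; apply: spanK_sum => i; rewrite scalerA.
exact: spanK_cat_flatten (mem_index_enum i) _ (wT i a aw).
Qed.

Lemma dimK_orbits_combination (w : seq R) (ys zs : seq N) (c : N -> 'I_(size ys) -> R) :
  (forall z, z \in zs -> z = \sum_(i < size ys) c z i *: ys`_i) ->
  (dimK (spanK (orbits_seq w zs)) <= dimK (spanK (orbits_seq w ys)) +
     \sum_(z <- zs) \sum_(i < size ys) excess (spanK (V := R^o) w) (c z i))%N.
Proof.
move=> zsE; have [T /all_and2[sizeT wT]] := choice (fun z => combination_excess w (c z)).
apply: (@leq_trans (dimK (spanK (orbits_seq w ys ++ flatten (map T zs))))).
  apply: dimKS; [exact: fd_spanK | exact: fd_spanK |].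
  apply: spanK_subset => _ /flatten_mapP[z zzs /mapP[a aw ->]].
  by rewrite [z in a *: z]zsE //; apply: spanK_cat_flatten zzs _ (wT z a aw).
rewrite spanK_cat (leq_trans (dimK_setadd_leq _ (fd_spanK _))) // leq_add2l.
by rewrite size_flatten_map; apply: leq_sum => z _.
Qed.

End Orbits.

Section RowOrbits.
Variables (K : fieldType) (R : algType K) (m : nat).

Lemma linear_coord (j : 'I_m) : linear (fun v : 'rV[R]_m => (v 0 j : R^o)).
Proof. by move=> r u v; rewrite !mxE. Qed.

Lemma scale_delta_coord (a : R) (i j : 'I_m) :
  (a *: delta_mx 0 i : 'rV[R]_m) 0 j = if i == j then a else 0.
Proof. by rewrite !mxE eqxx mulr_natr eq_sym; case: (i == j). Qed.

Lemma dimK_orbits_delta (w : seq R) (l : seq 'I_m) : freeK (V := R^o) w -> uniq l ->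
  dimK (spanK (orbits_seq w [seq delta_mx 0 i | i <- l] : seq 'rV[R]_m)) =
  (size l * size w)%N.
Proof.
move=> fw; elim: l => [_|i l IH /= /andP[il ul]].
  by apply/eqP; rewrite -leqn0; exact: (dimK_leq_size (s := [::]) erefl).
have coord0 j (s : seq 'rV[R]_m) v :
    (forall x, x \in s -> x 0 j = 0) -> spanK s v -> v 0 j = 0.
  by move=> s0; apply: (spanK_kernel (linear_klinear (linear_coord j))).
rewrite dimK_cat_disjoint; last first.
  move=> v iv lv; apply/rowP => j; rewrite mxE.
  have [<-|ij] := eqVneq i j.
    apply: coord0 lv => _ /flatten_mapP[_ /mapP[k kl ->] /mapP[a _ ->]].
    by rewrite scale_delta_coord; case: eqP kl => // ->; rewrite (negbTE il).
  by apply: coord0 iv => _ /mapP[a _ ->]; rewrite scale_delta_coord (negbTE ij).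
have ioL := linear_klinear (linear_scalel (delta_mx 0 i : 'rV[R]_m)).
have io_inj : injective (fun a : R^o => a *: (delta_mx 0 i : 'rV[R]_m)).
  by move=> a b /rowP/(_ i); rewrite !scale_delta_coord eqxx.
rewrite IH // (spanK_map ioL) (dimK_image_inj ioL io_inj (fd_spanK _)).
by rewrite dimK_freeK // mulSn.
Qed.

End RowOrbits.

Section RSpan.
Variables (K : fieldType) (R : algType K) (N : lmodType R).

Definition spanR (xs : seq N) : set N :=
  [set m | exists c : 'I_(size xs) -> R, m = \sum_(i < size xs) c i *: xs`_i].

Lemma spanR0 (xs : seq N) : spanR xs 0.
Proof. by exists (fun=> 0); rewrite big1 // => i _; rewrite scale0r. Qed.

Lemma spanR_cons (x : N) xs r v : spanR xs v -> spanR (x :: xs) (r *: x + v).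
Proof.
move=> [c ->]; exists (fun i : 'I_(size xs).+1 => oapp c r (unlift ord0 i)).
rewrite big_ord_recl /= unlift_none; congr (_ + _).
by apply: eq_bigr => i _; rewrite liftK.
Qed.

Lemma spanR_sum_map (I : Type) (l : seq I) (F : I -> N) (r : I -> R) :
  spanR (map F l) (\sum_(i <- l) r i *: F i).
Proof.
elim: l => [|i l IH]; first by rewrite big_nil; apply: spanR0.
by rewrite big_cons; apply: spanR_cons.
Qed.

Lemma spanR_cat (s t : seq N) u v : spanR s u -> spanR t v -> spanR (s ++ t) (u + v).
Proof.
elim: s u => [|x s IH] u [c ->] tv /=; first by rewrite big_ord0 add0r.
rewrite big_ord_recl -addrA; apply/spanR_cons/IH => //.
by exists (c \o lift ord0).
Qed.

End RSpan.

Section LinearImages.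
Variables (K : fieldType) (R : algType K) (N N' : lmodType R).

Lemma orbits_seq_map (f : N -> N') (w : seq R) (xs : seq N) :
  scalable f -> orbits_seq w (map f xs) = map f (orbits_seq w xs).
Proof.
move=> fZ; rewrite /orbits_seq map_flatten -!map_comp; congr flatten.
by apply: eq_map => x /=; rewrite -map_comp; apply: eq_map => a /=; rewrite fZ.
Qed.

Variable f : {linear N -> N'}.

Lemma sum_orbits_map (W : set R) (xs : seq N) : fd_subspace (V := R^o) W ->
  sum_orbits W (map f xs) = f @` sum_orbits W xs.
Proof.
move=> [w ->]; rewrite !sum_orbits_spanK (orbits_seq_map _ _ (linearZ_LR f)).
by rewrite (spanK_map (linear_klinear (linearP f))).
Qed.

Lemma spanR_map (xs : seq N) v : spanR xs v -> spanR (map f xs) (f v).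
Proof.
elim: xs v => [|x xs IH] v [c ->] /=; first by rewrite big_ord0 linear0; apply: spanR0.
rewrite big_ord_recl linearD linearZ; apply/spanR_cons/IH.
by exists (c \o lift ord0).
Qed.

End LinearImages.

Section PairInjections.
Variables (K : fieldType) (R : algType K) (M N : lmodType R).

Definition pair_inl (x : M) : M * N := (x, 0).
Definition pair_inr (y : N) : M * N := (0, y).

Lemma pair_inl_linear : linear pair_inl.
Proof. by move=> r u v; congr (_, _); rewrite -[RHS]/(r *: 0 + 0) scaler0 addr0. Qed.

Lemma pair_inr_linear : linear pair_inr.
Proof. by move=> r u v; congr (_, _); rewrite -[RHS]/(r *: 0 + 0) scaler0 addr0. Qed.

HB.instance Definition _ :=
  GRing.isLinear.Build R M (M * N)%type *:%R pair_inl pair_inl_linear.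
HB.instance Definition _ :=
  GRing.isLinear.Build R N (M * N)%type *:%R pair_inr pair_inr_linear.

Lemma pair_inl_inj : injective pair_inl. Proof. by move=> x y []. Qed.
Lemma pair_inr_inj : injective pair_inr. Proof. by move=> x y []. Qed.

Lemma pair_inlr (x : M) (y : N) : (x, y) = pair_inl x + pair_inr y.
Proof. by rewrite -[RHS]/(x + 0, 0 + y) addr0 add0r. Qed.

End PairInjections.

Arguments pair_inl {K R} M N.
Arguments pair_inr {K R} M N.
Arguments pair_inl_inj {K R M N}.
Arguments pair_inr_inj {K R M N}.

(** * Ultralimits and Folner exhaustions *)

Lemma cvg_sum0 (RR : realType) (I : Type) (r : seq I) (u : I -> nat -> RR) :
  (forall i, u i @ \oo --> 0) -> (fun n => \sum_(i <- r) u i n) @ \oo --> 0.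
Proof.
move=> u0; rewrite [X in _ --> X](_ : 0 = \sum_(i <- r) (0 : RR)); last by rewrite big1.
by apply: (cvg_big add_continuous) => // i _; apply: u0.
Qed.

Section Ultralimit.
Variables (RR : realType) (omega : set_system nat).
Hypothesis omega_np : nonprincipal_ultrafilter omega.

Let omega_ultra : UltraFilter omega := omega_np.1.
#[local] Instance omega_proper : ProperFilter omega := @ultra_proper _ _ omega_ultra.

Lemma ultra_fmap (T : Type) (f : nat -> T) : UltraFilter (f @ omega).
Proof.
split; first exact: fmap_proper_filter.
move=> G PG fG; rewrite predeqE => A; split; last exact: fG.
move=> GA; case: (in_ultra_setVsetC (f @^-1` A) omega_ultra) => // omega_nA.
have GnA : G (~` A) by apply: fG.
have : G (A `&` ~` A) by apply: filterI.
by rewrite setICr => /filter_ex[].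
Qed.

Lemma cofinite_omega (P : set nat) : (\forall n \near \oo, P n) -> omega P.
Proof.
move=> [n0 _ Pn0]; rewrite -[P]setCK; apply: omega_np.2.
apply: sub_finite_set (finite_II n0) => n /= nP; rewrite ltnNge.
by apply: contra_notN nP => /Pn0.
Qed.

Lemma cvg_omega (a : nat -> RR) (l : RR) : a @ \oo --> l -> a @ omega --> l.
Proof. by move=> al A /al; apply: cofinite_omega. Qed.

Lemma ulim_cvg (a : nat -> RR) (l : RR) : a @ \oo --> l -> ulim omega a = l.
Proof. by move/cvg_omega/cvg_lim; apply. Qed.

Lemma cvg_ulim (a : nat -> RR) (B : RR) : (forall n, 0 <= a n <= B) ->
  a @ omega --> ulim omega a.
Proof.
move=> aB; have [l [_ al]] : exists l, (`[0, B] `&` cluster (a @ omega)) l.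
  apply: segment_compact => /=; apply: filterE => n /=.
  by rewrite in_itv /= aB.
have a_ultra := ultra_fmap a.
by rewrite ultra_cvg_clusterE /= in al; rewrite /ulim (cvg_lim _ al).
Qed.

Lemma ulimD (a b : nat -> RR) (A B : RR) :
  (forall n, 0 <= a n <= A) -> (forall n, 0 <= b n <= B) ->
  ulim omega (a \+ b) = ulim omega a + ulim omega b.
Proof.
by move=> aA bB; rewrite {1}/ulim (cvg_lim _ (cvgD (cvg_ulim aA) (cvg_ulim bB))).
Qed.

Lemma ler_ulim (a b e : nat -> RR) (A B : RR) :
  (forall n, 0 <= a n <= A) -> (forall n, 0 <= b n <= B) ->
  e @ \oo --> 0 -> (forall n, a n <= b n + e n) ->
  ulim omega a <= ulim omega b.
Proof.
move=> aA bB e0 abe; have be : (b \+ e) @ omega --> ulim omega b + 0.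
  by apply: cvgD; [apply: cvg_ulim bB | apply: cvg_omega].
rewrite -[ulim omega b]addr0 -(cvg_lim _ be) //.
apply: ler_lim; [exact: cvgP (cvg_ulim aA) | exact: cvgP be |].
by apply: filterE => n; apply: abe.
Qed.

End Ultralimit.

Section FolnerRank.
Variables (RR : realType) (K : fieldType) (R : algType K) (W : nat -> set R).
Hypothesis W_folner : folner_exhaustion RR W.

Local Notation dimW n := (dimK (V := R^o) (W n)).

Lemma fd_folner n : fd_subspace (V := R^o) (W n).
Proof. by case: W_folner. Qed.

Definition orbit_ratio (N : lmodType R) (xs : seq N) n : RR :=
  (dimK (sum_orbits (W n) xs))%:R / (dimW n)%:R.

Lemma orbit_ratio_bounds (N : lmodType R) (xs : seq N) n :
  0 <= orbit_ratio xs n <= (size xs)%:R.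
Proof.
rewrite /orbit_ratio divr_ge0 //=.
have [->|dW_gt0] := posnP (dimW n); first by rewrite invr0 mulr0.
rewrite ler_pdivrMr ?ltr0n // -natrM ler_nat mulnC.
exact: dimK_sum_orbits_leq (fd_folner n).
Qed.

Lemma dimW_gt0 : \forall n \near \oo, (0 < dimW n)%N.
Proof.
case: W_folner => _ _ _ /(_ 1) /cvgr_gt /(_ 0 ltr01).
apply: filterS => n; rewrite lt0n; apply: contraTN => /eqP ->.
by rewrite invr0 mulr0 ltxx.
Qed.

Lemma excess_ratio_cvg0 (r : R) :
  (fun n => (excess (W n) r)%:R / (dimW n)%:R : RR) @ \oo --> 0.
Proof.
case: W_folner => _ _ _ /(_ r) Wr1.
have : (fun n => (dimK (V := R^o) (setadd (setmulr (W n) r) (W n)))%:R / (dimW n)%:R - 1)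
    @ \oo --> (0 : RR).
  by rewrite -(subrr (1 : RR)); apply: cvgB => //; apply: cvg_cst.
apply: cvg_trans; apply: near_eq_cvg; near=> n.
have dW_gt0 : (0 < dimW n)%N by near: n; apply: dimW_gt0.
have [w Ww] := fd_folner n.
have /(dimKS (fd_folner n)) dWr : W n `<=` setadd (setmulr (W n) r) (W n).
  move=> u Wu; exists 0, u; rewrite add0r; split=> //.
  by exists 0; rewrite ?mul0r // Ww; apply: spanK0.
rewrite /excess natrB ?dWr //; last first.
  by exists ([seq a * r | a <- w] ++ w); rewrite spanK_cat Ww setmulr_spanK.
by rewrite mulrBl divff // pnatr_eq0 -lt0n.
Unshelve. all: by end_near.
Qed.

Variable omega : set_system nat.
Hypothesis omega_np : nonprincipal_ultrafilter omega.

Local Notation rank_gens := (rank_gens RR W omega).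
Local Notation rank := (rank RR W omega).

Lemma orbit_ratio_combination (N : lmodType R) (ys zs : seq N)
    (c : N -> 'I_(size ys) -> R) n :
  (forall z, z \in zs -> z = \sum_(i < size ys) c z i *: ys`_i) ->
  orbit_ratio zs n <= orbit_ratio ys n +
    \sum_(z <- zs) \sum_(i < size ys) (excess (W n) (c z i))%:R / (dimW n)%:R.
Proof.
move=> zsE; under eq_bigr do rewrite -mulr_suml -natr_sum.
rewrite -mulr_suml -natr_sum /orbit_ratio -mulrDl ler_wpM2r ?invr_ge0 //.
have [w Ww] := fd_folner n.
by rewrite -natrD ler_nat Ww !sum_orbits_spanK; apply: dimK_orbits_combination.
Qed.

Lemma rank_gens_le (N : lmodType R) (ys zs : seq N) :
  (forall z, z \in zs -> spanR ys z) -> rank_gens zs <= rank_gens ys.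
Proof.
move=> zs_ys.
have /choice[c zsE] : forall z, exists c : 'I_(size ys) -> R,
    z \in zs -> z = \sum_(i < size ys) c i *: ys`_i.
  move=> z; have [/zs_ys[c ->]|_] := boolP (z \in zs); first by exists c.
  by exists (fun=> 0).
apply: (ler_ulim omega_np (orbit_ratio_bounds zs) (orbit_ratio_bounds ys)
  _ (fun n => orbit_ratio_combination n zsE)).
by apply: cvg_sum0 => z; apply: cvg_sum0 => i; apply: excess_ratio_cvg0.
Qed.

Lemma rankE (N : lmodType R) (xs : seq N) : generates xs -> rank N = rank_gens xs.
Proof.
move=> gen_xs; rewrite /Defs.rank; case: pselect => [ex|[]]; last by exists xs.
apply/eqP; rewrite eq_le; apply/andP; split; apply: rank_gens_le => z _.
  exact: gen_xs.
exact: (proj2_sig (cid ex)).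
Qed.

Lemma rank_gens_map_inj (N N' : lmodType R) (f : {linear N -> N'}) (xs : seq N) :
  injective f -> rank_gens (map f xs) = rank_gens xs.
Proof.
move=> f_inj; congr ulim; apply: funext => n; have fdWn := fd_folner n.
rewrite (sum_orbits_map f _ fdWn).
by rewrite (dimK_image_inj (linear_klinear (linearP f)) f_inj (fd_sum_orbits xs fdWn)).
Qed.

Lemma rank_gens_map_le (N N' : lmodType R) (f : {linear N -> N'}) (xs : seq N) :
  rank_gens (map f xs) <= rank_gens xs.
Proof.
apply: (ler_ulim omega_np (orbit_ratio_bounds _) (orbit_ratio_bounds xs)
  (cvg_cst 0)) => n; have fdWn := fd_folner n.
rewrite addr0 ler_wpM2r ?invr_ge0 // ler_nat (sum_orbits_map f _ fdWn).
exact: (dimK_image_leq (linear_klinear (linearP f)) (fd_sum_orbits xs fdWn)).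
Qed.

Lemma rank_sub (M N : lmodType R) (f : {linear M -> N}) :
  fin_gen M -> fin_gen N -> injective f -> rank M <= rank N.
Proof.
move=> [xs gen_xs] [ys gen_ys] f_inj.
rewrite (rankE gen_xs) (rankE gen_ys) -(rank_gens_map_inj xs f_inj).
by apply: rank_gens_le => z _; apply: gen_ys.
Qed.

Lemma rank_quotient (M N : lmodType R) (g : {linear N -> M}) :
  fin_gen N -> (forall m : M, exists y : N, g y = m) -> rank M <= rank N.
Proof.
move=> [ys gen_ys] g_surj.
have gen_gys : generates (map g ys).
  by move=> m; have [y <-] := g_surj m; apply/spanR_map/gen_ys.
by rewrite (rankE gen_gys) (rankE gen_ys); apply: rank_gens_map_le.
Qed.

Lemma rank_prod (M N : lmodType R) :
  fin_gen M -> fin_gen N -> rank (M * N)%type = rank M + rank N.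
Proof.
move=> [xs gen_xs] [ys gen_ys].
have gen_xys : generates (map (pair_inl M N) xs ++ map (pair_inr M N) ys).
  move=> [x y]; rewrite pair_inlr.
  by apply: spanR_cat; apply/spanR_map; [apply: gen_xs | apply: gen_ys].
rewrite (rankE gen_xys) (rankE gen_xs) (rankE gen_ys).
rewrite -(ulimD omega_np (orbit_ratio_bounds xs) (orbit_ratio_bounds ys)).
congr ulim; apply: funext => n; rewrite /= -mulrDl -natrD; congr (_%:R / _).
have [w ->] := fd_folner n.
rewrite !sum_orbits_spanK orbits_seq_cat !(orbits_seq_map _ _ (linearZ_LR _)).
have inl_klin := linear_klinear (linearP (pair_inl M N)).
have inr_klin := linear_klinear (linearP (pair_inr M N)).
rewrite dimK_cat_disjoint (spanK_map inl_klin) (spanK_map inr_klin); last first.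
  by move=> [x y] [u _ [_ <-]] [v _ [<- _]].
rewrite (dimK_image_inj inl_klin pair_inl_inj) ?(dimK_image_inj inr_klin pair_inr_inj) //.
all: exact: fd_spanK.
Qed.

Lemma rank_rV n : rank 'rV[R]_n = n%:R.
Proof.
pose es : seq 'rV[R]_n := [seq delta_mx 0 i | i <- index_enum 'I_n].
have gen_es : generates es by move=> v; rewrite [v]row_sum_delta; apply: spanR_sum_map.
have size_enum : size (index_enum 'I_n) = n.
  by rewrite [index_enum _]unlock -enumT; apply: size_enum_ord.
rewrite (rankE gen_es); apply: (ulim_cvg omega_np).
have cst_n : (fun=> n%:R) @ \oo --> (n%:R : RR) by apply: cvg_cst.
apply: cvg_trans cst_n; apply: near_eq_cvg; near=> k.
have dW_gt0 : (0 < dimW k)%N by near: k; exact: dimW_gt0.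
have [w fw Ww] := basisK (fd_folner k).
rewrite Ww dimK_freeK // in dW_gt0.
rewrite Ww sum_orbits_spanK dimK_orbits_delta ?index_enum_uniq // size_enum natrM.
by rewrite dimK_freeK // mulfK // pnatr_eq0 -lt0n.
Unshelve. all: by end_near.
Qed.

End FolnerRank.

Theorem corollary1 (RR : realType) (K : fieldType) (R : algType K)
  (W : nat -> set R) (omega : set_system nat) :
  affine_algebra R ->
  folner_exhaustion RR W ->
  nonprincipal_ultrafilter omega ->
  [/\ (* (1) rank(R^n) = n *)
      (forall n : nat, (1 <= n)%N -> rank RR W omega 'rV[R]_n = n%:R),
      (* (2a) M isomorphic to a submodule of N *)
      (forall (M N : lmodType R) (f : {linear M -> N}),
         fin_gen M -> fin_gen N -> injective f ->
         rank RR W omega M <= rank RR W omega N),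
      (* (2b) M a homomorphic image of N *)
      (forall (M N : lmodType R) (g : {linear N -> M}),
         fin_gen M -> fin_gen N -> (forall m : M, exists y : N, g y = m) ->
         rank RR W omega M <= rank RR W omega N) &
      (* (3) additivity on direct sums *)
      (forall (M N : lmodType R), fin_gen M -> fin_gen N ->
         rank RR W omega (M * N)%type = rank RR W omega M + rank RR W omega N)].
Proof.
move=> _ W_folner omega_np; split.
- by move=> n _; apply: rank_rV.
- exact: rank_sub.
- by move=> M N g _; apply: rank_quotient.
- exact: rank_prod.
Qed.
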